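(* Let $p$ be a prime and let $\mathcal{S}$ be an infinite abelian group of exponent $p$ (i.e. $pg=0$ for all $g$), in the signature $(+,-,0)$. Let $I$ be the set of finite subgroups of $\mathcal{S}$, ordered by inclusion. Then $\lim_I\mathrm{Th}(A^* )=\mathrm{Th}(\mathcal{S}^* )$, where $A$ ranges over $I$.
   Context: For a structure $\mathcal{T}$ with universe $T$, $\mathrm{Th}(\mathcal{T}^* )$ is the set of sentences in $(+,-,0)$ expanded by a constant for each element of $T$ that are true in $\mathcal{T}$; these are regarded as subsets of the set of sentences with constants from the universe of $\mathcal{S}$. For a family $\{\Delta_i\}_{i\in I}$ indexed by a directed set: $\limsup_I \Delta_i=\{\theta: \forall i\ \exists j\ge i\ [\theta\in\Delta_j]\}$, $\liminf_I \Delta_i=\{\theta: \exists i\ \forall j\ge i\ [\theta\in\Delta_j]\}$, and $\lim_I\Delta_i=\Delta$ means both equal $\Delta$. *)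

From HB Require Import structures.
From mathcomp Require Import all_boot all_order all_algebra.
From Stdlib Require Import List.
Set Implicit Arguments. Unset Strict Implicit. Unset Printing Implicit Defensive.
Import GRing.Theory.
Local Open Scope ring_scope.

Inductive term (G : Type) : Type :=
| TVar : nat -> term G
| TConst : G -> term G
| TZero : term G
| TAdd : term G -> term G -> term G
| TNeg : term G -> term G.

Inductive formula (G : Type) : Type :=
| FEq : term G -> term G -> formula G
| FBot : formula G
| FNot : formula G -> formula G
| FAnd : formula G -> formula G -> formula G
| FOr : formula G -> formula G -> formula G
| FImp : formula G -> formula G -> formula G
| FAll : nat -> formula G -> formula G
| FEx : nat -> formula G -> formula G.

Arguments TZero {G}. Arguments FBot {G}.

Section Semantics.
Variable G : zmodType.

Fixpoint teval (e : nat -> G) (t : term G) : G :=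
  match t with
  | TVar n => e n
  | TConst g => g
  | TZero => 0
  | TAdd t1 t2 => teval e t1 + teval e t2
  | TNeg t1 => - teval e t1
  end.

Definition upd (e : nat -> G) (n : nat) (x : G) : nat -> G :=
  fun m => if m == n then x else e m.

(* Satisfaction in the substructure with universe A (quantifiers range over A). *)
Fixpoint sat (A : G -> Prop) (e : nat -> G) (f : formula G) : Prop :=
  match f with
  | FEq t1 t2 => teval e t1 = teval e t2
  | FBot => False
  | FNot f1 => ~ sat A e f1
  | FAnd f1 f2 => sat A e f1 /\ sat A e f2
  | FOr f1 f2 => sat A e f1 \/ sat A e f2
  | FImp f1 f2 => sat A e f1 -> sat A e f2
  | FAll n f1 => forall x, A x -> sat A (upd e n x) f1
  | FEx n f1 => exists x, A x /\ sat A (upd e n x) f1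
  end.

Fixpoint tvar_in (n : nat) (t : term G) : Prop :=
  match t with
  | TVar m => m = n
  | TConst _ => False
  | TZero => False
  | TAdd t1 t2 => tvar_in n t1 \/ tvar_in n t2
  | TNeg t1 => tvar_in n t1
  end.

Fixpoint free_in (n : nat) (f : formula G) : Prop :=
  match f with
  | FEq t1 t2 => tvar_in n t1 \/ tvar_in n t2
  | FBot => False
  | FNot f1 => free_in n f1
  | FAnd f1 f2 => free_in n f1 \/ free_in n f2
  | FOr f1 f2 => free_in n f1 \/ free_in n f2
  | FImp f1 f2 => free_in n f1 \/ free_in n f2
  | FAll m f1 => m <> n /\ free_in n f1
  | FEx m f1 => m <> n /\ free_in n f1
  end.

Definition sentence (f : formula G) : Prop := forall n, ~ free_in n f.

Fixpoint tconsts_in (A : G -> Prop) (t : term G) : Prop :=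
  match t with
  | TVar _ => True
  | TZero => True
  | TConst g => A g
  | TAdd t1 t2 => tconsts_in A t1 /\ tconsts_in A t2
  | TNeg t1 => tconsts_in A t1
  end.

Fixpoint consts_in (A : G -> Prop) (f : formula G) : Prop :=
  match f with
  | FEq t1 t2 => tconsts_in A t1 /\ tconsts_in A t2
  | FBot => True
  | FNot f1 => consts_in A f1
  | FAnd f1 f2 => consts_in A f1 /\ consts_in A f2
  | FOr f1 f2 => consts_in A f1 /\ consts_in A f2
  | FImp f1 f2 => consts_in A f1 /\ consts_in A f2
  | FAll _ f1 => consts_in A f1
  | FEx _ f1 => consts_in A f1
  end.

(* Th(A star): sentences with constants from A true in the substructure A,
   viewed as a set of sentences with constants from G. *)
Definition Th (A : G -> Prop) (f : formula G) : Prop :=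
  sentence f /\ consts_in A f /\ sat A (fun _ => 0) f.

Definition subgroupP (A : G -> Prop) : Prop :=
  A 0 /\ (forall x y, A x -> A y -> A (x + y)) /\ (forall x, A x -> A (- x)).

Definition finiteP (A : G -> Prop) : Prop := exists l : list G, forall x, A x -> In x l.

Definition finsub (A : G -> Prop) : Prop := subgroupP A /\ finiteP A.

Definition incl (A B : G -> Prop) : Prop := forall x, A x -> B x.

Definition limsup_I (Delta : (G -> Prop) -> formula G -> Prop) (f : formula G) : Prop :=
  forall A, finsub A -> exists B, finsub B /\ incl A B /\ Delta B f.

Definition liminf_I (Delta : (G -> Prop) -> formula G -> Prop) (f : formula G) : Prop :=
  exists A, finsub A /\ forall B, finsub B -> incl A B -> Delta B f.

End Semantics.

From Stdlib Require Import Classical.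
From Stdlib Require List.
From HB Require Import structures.
From mathcomp Require Import all_boot all_order all_algebra.
Set Implicit Arguments. Unset Strict Implicit. Unset Printing Implicit Defensive.
Import GRing.Theory.
Local Open Scope ring_scope.

(* An Ehrenfeucht-Fraisse argument.  Represent a partial isomorphism between
   subgroups of S by its graph P, a finite subgroup of S * S.  Because S has
   prime exponent, P extends by any pair (x, x') with x outside its domain and
   x' outside its range, and the extension has p |P| elements.  So if both
   subgroups have at least |P| p^q elements, the duplicator survives q rounds,
   and every formula of quantifier depth at most q whose constants are fixed by
   P has the same truth value in both.  For a formula f, start from the
   identity P0 on the subgroup generated by the constants of f and, S being
   infinite, grow it to a finite subgroup A0 with at least |P0| p^(qdepth f)
   elements: every finite subgroup containing A0 then agrees with S on f, so
   f lies in Th(A) eventually or never, according as it lies in Th(S). *)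

Lemma In_mem (T : eqType) (x : T) (l : seq T) : List.In x l <-> x \in l.
Proof.
elim: l => //= y l IH; rewrite in_cons; split.
- by case=> [->|/IH ->]; rewrite ?eqxx ?orbT.
- by case/orP=> [/eqP->|/IH]; auto.
Qed.

Section ExponentP.
Variables (p : nat) (V : zmodType).
Hypotheses (p_prime : prime p) (V_exp : forall x : V, x *+ p = 0).

Lemma mulrn_modp (x : V) n : x *+ n = x *+ (n %% p).
Proof. by rewrite {1}(divn_eq n p) mulrnDr mulrnA mulrnAC V_exp mul0rn add0r. Qed.

Lemma oppr_mulrn (x : V) : - x = x *+ p.-1.
Proof.
apply/eqP; rewrite eq_sym -subr_eq0 opprK -mulrSr prednK ?V_exp //.
exact: prime_gt0.
Qed.

Lemma mulrn_coprime_inv (x : V) m : ~~ (p %| m)%N -> exists u, x = x *+ m *+ u.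
Proof.
rewrite -prime_coprime // => /eqP coprime_pm.
have [a _] := Bezoutl m (prime_gt0 p_prime); rewrite coprime_pm => /dvdnP [k eq1].
have x_am : x + x *+ (a * m) = 0.
  by rewrite -[x in x + _]mulr1n -mulrnDr eq1 mulrnA V_exp.
have x_eq : x = - (x *+ (a * m)) by apply/eqP; rewrite -addr_eq0 x_am.
by exists (a * p.-1)%N; rewrite {1}x_eq oppr_mulrn -!mulrnA mulnCA mulnA.
Qed.

End ExponentP.

Section PartialIsomorphisms.
Variables (p : nat) (S : zmodType).
Hypotheses (p_prime : prime p) (S_exp : forall x : S, x *+ p = 0).
Implicit Types (P : seq (S * S)) (a b z : S * S) (U : S -> Prop).

Lemma pair_exp z : z *+ p = 0.
Proof. by rewrite pairMnE !S_exp. Qed.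

Lemma subgroup_mulrn U x n : subgroupP U -> U x -> U (x *+ n).
Proof.
case=> U0 [UD _] Ux; elim: n => [|n IH]; first by rewrite mulr0n.
by rewrite mulrS; apply: UD.
Qed.

Record partial_iso P : Prop := PartialIso {
  piso_uniq : uniq P;
  piso0 : 0 \in P;
  pisoD : {in P &, forall a b, a + b \in P};
  piso_fun : {in P &, forall a b, a.1 = b.1 -> a.2 = b.2};
  piso_inj : {in P &, forall a b, a.2 = b.2 -> a.1 = b.1} }.

Lemma mem_swap P a : (a \in map swap_pair P) = (swap_pair a \in P).
Proof. by rewrite -{1}(swap_pairK a) mem_map //; exact: can_inj swap_pairK. Qed.

Lemma unzip1_swap P : unzip1 (map swap_pair P) = unzip2 P.
Proof. by rewrite /unzip1 -map_comp. Qed.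

Lemma piso_swap P : partial_iso P -> partial_iso (map swap_pair P).
Proof.
case=> uP P0 PD Pfun Pinj; split.
- by rewrite map_inj_uniq //; exact: can_inj swap_pairK.
- by rewrite mem_swap.
- by move=> a b; rewrite !mem_swap; exact: PD.
- by move=> a b; rewrite !mem_swap; exact: Pinj.
- by move=> a b; rewrite !mem_swap; exact: Pfun.
Qed.

Section OnePartialIso.
Variables (P : seq (S * S)) (isoP : partial_iso P).

Lemma pisoMn a n : a \in P -> a *+ n \in P.
Proof.
move=> Pa; elim: n => [|n IH]; first by rewrite mulr0n (piso0 isoP).
by rewrite mulrS (pisoD isoP).
Qed.

Lemma pisoN a : a \in P -> - a \in P.
Proof. by rewrite (oppr_mulrn p_prime pair_exp); exact: pisoMn. Qed.

Lemma pisoB a b : a \in P -> b \in P -> a - b \in P.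
Proof. by move=> Pa Pb; rewrite (pisoD isoP) ?pisoN. Qed.

(* Since p is prime, [x *+ m] with [p] not dividing [m] generates the same
   cyclic group as [x]. *)
Lemma piso_dom_mulrn b x m :
  b \in P -> b.1 = x *+ m -> ~~ (p %| m)%N -> x \in unzip1 P.
Proof.
move=> Pb b1 ndvd; have [u xE] := mulrn_coprime_inv p_prime S_exp x ndvd.
by apply/mapP; exists (b *+ u); rewrite ?pisoMn // pairMnE /= b1.
Qed.

Lemma piso_adjoin_inj1 z a b k j :
  z.1 \notin unzip1 P -> a \in P -> b \in P -> (k < p)%N -> (j < p)%N ->
  a.1 + z.1 *+ k = b.1 + z.1 *+ j -> (a, k) = (b, j).
Proof.
move=> zP; wlog le_jk : a b k j / (j <= k)%N.
  move=> W Pa Pb kp jp E; case: (leqP j k) => [le_jk|/ltnW le_kj].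
    exact: W.
  by symmetry; apply: W => //; rewrite E.
move=> Pa Pb kp jp E.
have k_eq_j : k = j.
  apply/eqP; rewrite eqn_leq le_jk andbT leqNgt; apply/negP => lt_jk.
  have kjE : (b - a).1 = z.1 *+ (k - j).
    move: E; rewrite /= -{1}(subnK le_jk) mulrnDr addrA => /addIr <-.
    by rewrite addrAC subrr add0r.
  have ndvd : ~~ (p %| k - j)%N by rewrite gtnNdvd ?subn_gt0 // ltn_subLR ?ltn_addl.
  by move: zP; rewrite (piso_dom_mulrn (pisoB Pb Pa) kjE ndvd).
subst j; move/addIr: E => a1b1.
by case: a b Pa Pb a1b1 (piso_fun isoP Pa Pb a1b1) => [? ?] [? ?] /= _ _ -> ->.
Qed.

End OnePartialIso.

Lemma piso_adjoin_inj2 P z a b k j : partial_iso P ->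
  z.2 \notin unzip2 P -> a \in P -> b \in P -> (k < p)%N -> (j < p)%N ->
  a.2 + z.2 *+ k = b.2 + z.2 *+ j -> (a, k) = (b, j).
Proof.
move=> isoP zP Pa Pb kp jp E.
have swapP := piso_swap isoP; rewrite -unzip1_swap in zP.
have Pa' : swap_pair a \in map swap_pair P by rewrite mem_swap swap_pairK.
have Pb' : swap_pair b \in map swap_pair P by rewrite mem_swap swap_pairK.
have [ab ->] : swap_pair a = swap_pair b /\ k = j.
  apply/pair_equal_spec.
  exact: (piso_adjoin_inj1 swapP (z := swap_pair z) zP Pa' Pb' kp jp E).
by rewrite -[a]swap_pairK ab swap_pairK.
Qed.

Definition adjoin P z := [seq a + z *+ k | a <- P, k <- iota 0 p].

Lemma size_adjoin P z : size (adjoin P z) = (size P * p)%N.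
Proof. by rewrite size_allpairs size_iota. Qed.

Lemma adjoin_subset P z : {subset P <= adjoin P z}.
Proof.
move=> a Pa; apply/allpairsP; exists (a, 0%N); split => //=.
  by rewrite mem_iota prime_gt0.
by rewrite mulr0n addr0.
Qed.

Lemma mem_adjoin P z : 0 \in P -> z \in adjoin P z.
Proof.
move=> P0; apply/allpairsP; exists (0, 1%N); split => //=.
  by rewrite mem_iota prime_gt1.
by rewrite mulr1n add0r.
Qed.

(* The elements of [adjoin P z] have unique normal forms [a + z *+ k] with
   [k < p], on either coordinate. *)
Lemma piso_adjoin P z : partial_iso P ->
  z.1 \notin unzip1 P -> z.2 \notin unzip2 P -> partial_iso (adjoin P z).
Proof.
move=> isoP z1P z2P.
have iotaP k : (k \in iota 0 p) = (k < p)%N by rewrite mem_iota.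
have memP u : u \in adjoin P z ->
    exists a k, [/\ a \in P, (k < p)%N & u = a + z *+ k].
  by case/allpairsP => -[a k] [/= Pa]; rewrite iotaP => kp ->; exists a, k.
split.
- apply: allpairs_uniq; [exact: piso_uniq isoP | exact: iota_uniq |].
  move=> [a k] [b j] /allpairsP [[a' k'] [/= Pa' + [-> ->]]].
  move=> + /allpairsP [[b' j'] [/= Pb' + [-> ->]]] /(congr1 fst).
  rewrite !iotaP /= !pairMnE /= => k'p j'p E.
  exact (piso_adjoin_inj1 isoP z1P Pa' Pb' k'p j'p E).
- exact/adjoin_subset/(piso0 isoP).
- move=> _ _ /memP [a [k [Pa kp ->]]] /memP [b [j [Pb jp ->]]].
  apply/allpairsP; exists (a + b, ((k + j) %% p)%N); split => /=.
  + exact: pisoD.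
  + by rewrite mem_iota ltn_pmod // prime_gt0.
  + by rewrite -(mulrn_modp pair_exp) mulrnDr addrACA.
- move=> _ _ /memP [a [k [Pa kp ->]]] /memP [b [j [Pb jp ->]]].
  rewrite /= !pairMnE /= => E.
  by case: (piso_adjoin_inj1 isoP z1P Pa Pb kp jp E) => -> ->.
- move=> _ _ /memP [a [k [Pa kp ->]]] /memP [b [j [Pb jp ->]]].
  rewrite /= !pairMnE /= => E.
  by case: (piso_adjoin_inj2 isoP z2P Pa Pb kp jp E) => -> ->.
Qed.

Lemma adjoin_supported U1 U2 P z :
  subgroupP U1 -> subgroupP U2 -> {in P, forall a, U1 a.1 /\ U2 a.2} ->
  U1 z.1 -> U2 z.2 -> {in adjoin P z, forall a, U1 a.1 /\ U2 a.2}.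
Proof.
move=> sU1 sU2 supp Uz1 Uz2 _ /allpairsP [[a k] [/= /supp [Ua1 Ua2] _ ->]].
rewrite pairMnE; split; [apply: sU1.2.1 | apply: sU2.2.1] => //;
  exact: subgroup_mulrn.
Qed.

End PartialIsomorphisms.

Section FormulaSyntax.
Variable G : zmodType.
Implicit Types (K : G -> Prop) (t : term G) (f : formula G).

Fixpoint qdepth f : nat :=
  match f with
  | FEq _ _ | FBot => 0
  | FNot g => qdepth g
  | FAnd g h | FOr g h | FImp g h => maxn (qdepth g) (qdepth h)
  | FAll _ g | FEx _ g => (qdepth g).+1
  end.

Fixpoint tconsts t : seq G :=
  match t with
  | TConst c => [:: c]
  | TAdd t1 t2 => tconsts t1 ++ tconsts t2
  | TNeg t1 => tconsts t1
  | _ => [::]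
  end.

Fixpoint fconsts f : seq G :=
  match f with
  | FEq t1 t2 => tconsts t1 ++ tconsts t2
  | FBot => [::]
  | FNot g | FAll _ g | FEx _ g => fconsts g
  | FAnd g h | FOr g h | FImp g h => fconsts g ++ fconsts h
  end.

Lemma tconsts_in_mono K (K' : G -> Prop) t :
  (forall c, K c -> K' c) -> tconsts_in K t -> tconsts_in K' t.
Proof.
move=> KK'; elim: t => [n | c | | t1 IH1 t2 IH2 | t1 IH] //=.
- exact: KK'.
- by case=> /IH1 ? /IH2.
Qed.

Lemma consts_in_mono K (K' : G -> Prop) f :
  (forall c, K c -> K' c) -> consts_in K f -> consts_in K' f.
Proof.
move=> KK'; have tmono := tconsts_in_mono KK'.
by elim: f => [t1 t2 | | g IH | g IHg h IHh | g IHg h IHh | g IHg h IHh | n g IH | n g IH] //=;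
  try case; auto.
Qed.

Lemma tconsts_in_tconsts t : tconsts_in (fun c => c \in tconsts t) t.
Proof.
elim: t => //= [c | t1 IH1 t2 IH2]; first by rewrite mem_seq1.
by split; [apply: tconsts_in_mono IH1 | apply: tconsts_in_mono IH2] => c;
  rewrite mem_cat => ->; rewrite ?orbT.
Qed.

Lemma consts_in_fconsts f : consts_in (fun c => c \in fconsts f) f.
Proof.
have catl (s s' : seq G) c : c \in s -> c \in s ++ s' by rewrite mem_cat => ->.
have catr (s s' : seq G) c : c \in s' -> c \in s ++ s' by rewrite mem_cat => ->; rewrite orbT.
elim: f => //= [t1 t2 | g IHg h IHh | g IHg h IHh | g IHg h IHh].
  by split; [apply: tconsts_in_mono (tconsts_in_tconsts t1) => c; exact: catl
            |apply: tconsts_in_mono (tconsts_in_tconsts t2) => c; exact: catr].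
all: by split; [apply: consts_in_mono IHg => c; exact: catl
               |apply: consts_in_mono IHh => c; exact: catr].
Qed.

End FormulaSyntax.

Section BackAndForth.
Variables (p : nat) (S : zmodType).
Hypotheses (p_prime : prime p) (S_exp : forall x : S, x *+ p = 0).
Implicit Types (P : seq (S * S)) (a : S * S) (U : S -> Prop) (e : nat -> S).

(* Phrased via lists so that it also applies to an infinite [U]. *)
Definition has_at_least U n :=
  forall l : seq S, (size l < n)%N -> exists2 y, U y & y \notin l.

Lemma has_at_leastW U (U' : S -> Prop) m n :
  (forall x, U x -> U' x) -> (m <= n)%N -> has_at_least U n -> has_at_least U' m.
Proof.
move=> UU' le_mn Un l lt_lm; have [|y /UU' U'y ny] := Un l; last by exists y.
exact: leq_trans le_mn.
Qed.

Lemma piso_teval P e1 e2 t : partial_iso P ->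
  tconsts_in (fun c => (c, c) \in P) t ->
  (forall v, tvar_in v t -> (e1 v, e2 v) \in P) -> (teval e1 t, teval e2 t) \in P.
Proof.
move=> isoP; elim: t => [n | c | | t1 IH1 t2 IH2 | t IH] /= cst env.
- exact: env.
- exact: cst.
- exact: piso0 isoP.
- have [c1 c2] := cst.
  exact: (pisoD isoP (IH1 c1 (fun v h => env v (or_introl h)))
                     (IH2 c2 (fun v h => env v (or_intror h)))).
- exact: (pisoN p_prime S_exp isoP (IH cst env)).
Qed.

Lemma piso_extend U1 U2 P x :
  subgroupP U1 -> subgroupP U2 -> partial_iso P -> {in P, forall a, U1 a.1 /\ U2 a.2} ->
  has_at_least U2 (size P).+1 -> U1 x ->
  exists2 x', U2 x' & exists P', [/\ partial_iso P', {in P', forall a, U1 a.1 /\ U2 a.2},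
    (x, x') \in P', {subset P <= P'} & (size P' <= size P * p)%N].
Proof.
move=> sU1 sU2 isoP supp room Ux.
have p_gt0 := prime_gt0 p_prime.
case: (boolP (x \in unzip1 P)) => [/mapP [a Pa ->] | xP].
  have [_ Ua2] := supp a Pa.
  by exists a.2 => //; exists P; split; rewrite -?surjective_pairing ?leq_pmulr.
have [x' Ux' x'P] : exists2 x', U2 x' & x' \notin unzip2 P.
  by apply: room; rewrite size_map.
exists x' => //; exists (adjoin p P (x, x')); split.
- exact: piso_adjoin.
- exact: adjoin_supported.
- exact/mem_adjoin/(piso0 isoP).
- exact: adjoin_subset.
- by rewrite size_adjoin.
Qed.

(* The invariant of the Ehrenfeucht-Fraisse game on [U1] and [U2] with
   [qdepth f] rounds left. *)
Record back_forth U1 U2 e1 e2 P (f : formula S) : Prop := BackForth {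
  bf_sub1 : subgroupP U1;
  bf_sub2 : subgroupP U2;
  bf_iso : partial_iso P;
  bf_supp : {in P, forall a, U1 a.1 /\ U2 a.2};
  bf_consts : consts_in (fun c => (c, c) \in P) f;
  bf_env : forall v, free_in v f -> (e1 v, e2 v) \in P;
  bf_room1 : has_at_least U1 (size P * p ^ qdepth f);
  bf_room2 : has_at_least U2 (size P * p ^ qdepth f) }.

Lemma back_forth_swap U1 U2 e1 e2 P f :
  back_forth U1 U2 e1 e2 P f -> back_forth U2 U1 e2 e1 (map swap_pair P) f.
Proof.
case=> sU1 sU2 isoP supp cst env r1 r2; split; rewrite ?size_map //.
- exact: piso_swap.
- by move=> a; rewrite mem_swap => /supp [].
- by apply: consts_in_mono cst => c; rewrite mem_swap.
- by move=> v /env; rewrite mem_swap.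
Qed.

Lemma back_forth_sub U1 U2 e1 e2 P f g :
  back_forth U1 U2 e1 e2 P f -> consts_in (fun c => (c, c) \in P) g ->
  (forall v, free_in v g -> free_in v f) -> (qdepth g <= qdepth f)%N ->
  back_forth U1 U2 e1 e2 P g.
Proof.
case=> sU1 sU2 isoP supp _ env r1 r2 cst fv le_gf.
have le_room : (size P * p ^ qdepth g <= size P * p ^ qdepth f)%N.
  by rewrite leq_mul2l leq_pexp2l ?prime_gt0 ?orbT.
split=> //; [by move=> v /fv /env | exact: has_at_leastW le_room r1
                                   | exact: has_at_leastW le_room r2].
Qed.

Lemma back_forth_quant U1 U2 e1 e2 P (Q : nat -> formula S -> formula S) n g x :
  Q = @FAll S \/ Q = @FEx S -> back_forth U1 U2 e1 e2 P (Q n g) -> U1 x ->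
  exists2 x', U2 x' & exists P', back_forth U1 U2 (upd e1 n x) (upd e2 n x') P' g.
Proof.
move=> hQ [sU1 sU2 isoP supp cst env r1 r2] Ux.
have [qdQ cstQ fvQ] : [/\ qdepth (Q n g) = (qdepth g).+1,
    consts_in (fun c => (c, c) \in P) g &
    forall v, free_in v g -> v <> n -> free_in v (Q n g)].
  by case: hQ cst => -> cst; split=> // v gv /nesym.
have sizeP_gt0 : (0 < size P)%N by case: (P) (piso0 isoP).
have room2 : has_at_least U2 (size P).+1.
  apply: has_at_leastW r2 => //; rewrite qdQ ltn_Pmulr //.
  by rewrite -[1%N](expn0 p) ltn_exp2l ?prime_gt1.
have [x' Ux' [P' [isoP' supp' xx' subPP' sizeP']]] := piso_extend sU1 sU2 isoP supp room2 Ux.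
have room' : (size P' * p ^ qdepth g <= size P * p ^ qdepth (Q n g))%N.
  by rewrite qdQ expnS mulnA leq_mul2r sizeP' orbT.
exists x' => //; exists P'; split=> //.
- by apply: consts_in_mono cstQ => c /subPP'.
- move=> v gv; rewrite /upd; case: eqP => [_ | nv]; first exact: xx'.
  exact/subPP'/env/fvQ.
- exact: has_at_leastW room' r1.
- exact: has_at_leastW room' r2.
Qed.

Lemma sat_back_forth f U1 U2 e1 e2 P :
  back_forth U1 U2 e1 e2 P f -> sat U1 e1 f -> sat U2 e2 f.
Proof.
elim: f U1 U2 e1 e2 P => [t1 t2 | | g IH | g IHg h IHh | g IHg h IHh | g IHg h IHh
                        | n g IH | n g IH] U1 U2 e1 e2 P bf /=.
4-6: have [cg ch] := bf_consts bf;
  have bg := back_forth_sub bf cg (fun v gv => or_introl gv) (leq_maxl _ _);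
  have bh := back_forth_sub bf ch (fun v hv => or_intror hv) (leq_maxr _ _).
- have [_ _ isoP _ [c1 c2] env _ _] := bf.
  have P1 : (teval e1 t1, teval e2 t1) \in P.
    by apply: piso_teval => // v tv; apply: env; left.
  have P2 : (teval e1 t2, teval e2 t2) \in P.
    by apply: piso_teval => // v tv; apply: env; right.
  exact (piso_fun isoP P1 P2).
- by [].
- have bg := back_forth_sub (g := g) bf (bf_consts bf) (fun v gv => gv) (leqnn _).
  by move=> ns1 /(IH _ _ _ _ _ (back_forth_swap bg)).
- by case=> /(IHg _ _ _ _ _ bg) ? /(IHh _ _ _ _ _ bh).
- by case=> [/(IHg _ _ _ _ _ bg) | /(IHh _ _ _ _ _ bh)]; [left | right].
- by move=> gh /(IHg _ _ _ _ _ (back_forth_swap bg)) /gh /(IHh _ _ _ _ _ bh).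
- move=> all1 y Uy.
  have [x Ux [P' bf']] := back_forth_quant (or_introl erefl) (back_forth_swap bf) Uy.
  exact: IH _ _ _ _ _ (back_forth_swap bf') (all1 x Ux).
- case=> x [Ux sat1].
  have [y Uy [P' bf']] := back_forth_quant (or_intror erefl) bf Ux.
  by exists y; split; last exact: IH _ _ _ _ _ bf' sat1.
Qed.

End BackAndForth.

Section FiniteSubgroups.
Variables (p : nat) (S : zmodType).
Hypotheses (p_prime : prime p) (S_exp : forall x : S, x *+ p = 0).
Implicit Types (P : seq (S * S)) (a : S * S) (l : seq S).

Lemma piso_zero : partial_iso [:: 0 : S * S].
Proof.
split=> //; first by rewrite mem_seq1.
all: by move=> a b; rewrite !mem_seq1 => /eqP -> /eqP ->; rewrite ?addr0.
Qed.

Definition diagonal P := {in P, forall a, a.1 = a.2}.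

Lemma diagonal_adjoin P x : partial_iso P -> diagonal P ->
  exists P', [/\ partial_iso P', diagonal P', (x, x) \in P' & {subset P <= P'}].
Proof.
move=> isoP diagP; case: (boolP ((x, x) \in P)) => [xxP | xxP]; first by exists P; split.
have xP1 : x \notin unzip1 P.
  apply: contra xxP => /mapP [a Pa ->].
  by rewrite {2}(diagP _ Pa) -surjective_pairing.
have xP2 : x \notin unzip2 P.
  apply: contra xxP => /mapP [a Pa ->].
  by rewrite -{1}(diagP _ Pa) -surjective_pairing.
exists (adjoin p P (x, x)); split.
- exact: piso_adjoin.
- by move=> _ /allpairsP [[a k] [/= Pa _ ->]]; rewrite pairMnE /= diagP.
- exact/mem_adjoin/(piso0 isoP).
- exact: adjoin_subset.
Qed.

Lemma piso_fixing l : exists P, partial_iso P /\ forall c, c \in l -> (c, c) \in P.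
Proof.
suff [P [isoP _ lP]] : exists P, [/\ partial_iso P, diagonal P
    & forall c, c \in l -> (c, c) \in P] by exists P.
elim: l => [|x l [P [isoP diagP lP]]].
  by exists [:: 0]; split=> //; [exact: piso_zero | move=> a; rewrite mem_seq1 => /eqP ->].
have [P' [isoP' diagP' xP' subPP']] := diagonal_adjoin x isoP diagP.
by exists P'; split=> // c; rewrite inE => /predU1P [-> | /lP /subPP'].
Qed.

Lemma finsub_dom P : partial_iso P -> finsub (fun x => x \in unzip1 P).
Proof.
move=> isoP; split; last by exists (unzip1 P) => x /In_mem.
split; first by apply/mapP; exists 0; first exact: piso0 isoP.
split.
  move=> _ _ /mapP [a Pa ->] /mapP [b Pb ->]; apply/mapP.
  by exists (a + b); first exact (pisoD isoP Pa Pb).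
move=> _ /mapP [a Pa ->]; apply/mapP; exists (- a) => //.
exact (pisoN p_prime S_exp isoP Pa).
Qed.

Lemma has_at_least_dom P : partial_iso P -> has_at_least (fun x => x \in unzip1 P) (size P).
Proof.
move=> isoP l lt_l.
have uP : uniq (unzip1 P).
  rewrite map_inj_in_uniq ?(piso_uniq isoP) // => -[x1 y1] [x2 y2] P1 P2 /= x12.
  by rewrite x12 (piso_fun isoP P1 P2 x12 : y1 = y2).
case: (boolP (all (mem l) (unzip1 P))) => [/allP sub | /allPn [y Py yl]]; last by exists y.
by move: lt_l; rewrite ltnNge -(size_map fst) (uniq_leq_size uP sub).
Qed.

Lemma finsub_directed (A A' : S -> Prop) : finsub A -> finsub A' ->
  exists B, [/\ finsub B, incl A B & incl A' B].
Proof.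
move=> [_ [l Al]] [_ [l' Al']]; have [P [isoP lP]] := piso_fixing (l ++ l').
exists (fun x => x \in unzip1 P); split; first exact: finsub_dom.
all: move=> x Ax; apply/mapP; exists (x, x) => //; apply: lP; rewrite mem_cat.
  by move/In_mem: (Al x Ax) => ->.
by move/In_mem: (Al' x Ax) => ->; rewrite orbT.
Qed.

Lemma liminf_limsup f : liminf_I (@Th S) f -> limsup_I (@Th S) f.
Proof.
move=> [A0 [fA0 thA0]] A fA; have [B [fB AB A0B]] := finsub_directed fA fA0.
by exists B; split=> //; split=> //; exact: thA0.
Qed.

Section InfiniteGroup.
Hypothesis S_infinite : ~ finiteP (fun _ : S => True).

Lemma has_at_least_setT n : has_at_least (fun _ : S => True) n.
Proof.
move=> l _; apply: NNPP => nl; apply: S_infinite; exists l => y _; apply/In_mem.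
by apply/negPn/negP => yl; apply: nl; exists y.
Qed.

Lemma piso_grow q P : partial_iso P ->
  exists P', [/\ partial_iso P', {subset P <= P'} & (size P * p ^ q <= size P')%N].
Proof.
elim: q P => [|q IH] P isoP; first by exists P; rewrite expn0 muln1; split.
have [x _ xP] := has_at_least_setT (ltnSn (size (unzip1 P))).
have [x' _ x'P] := has_at_least_setT (ltnSn (size (unzip2 P))).
have [P' [isoP' subP' sizeP']] := IH _ (piso_adjoin p_prime S_exp isoP (z := (x, x')) xP x'P).
exists P'; split=> //; first by move=> a /(adjoin_subset p_prime (x, x')) /subP'.
by rewrite expnS mulnA -(size_adjoin p P (x, x')).
Qed.

Lemma sat_eventually f : exists A0, [/\ finsub A0, consts_in A0 f &
  forall B, finsub B -> incl A0 B ->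
    (sat B (fun _ => 0) f <-> sat (fun _ : S => True) (fun _ => 0) f)].
Proof.
have [P0 [isoP0 fixP0]] := piso_fixing (fconsts f).
have cstP0 : consts_in (fun c => (c, c) \in P0) f.
  by apply: consts_in_mono (consts_in_fconsts f) => c /fixP0.
have [P [isoP subP sizeP]] := piso_grow (qdepth f) isoP0.
exists (fun x => x \in unzip1 P); split; first exact: finsub_dom.
  by apply: consts_in_mono cstP0 => c /subP cc; apply/mapP; exists (c, c).
move=> B [sB _] PB.
have bf : back_forth p B (fun _ => True) (fun _ => 0) (fun _ => 0) P0 f.
  split=> //.
  - by move=> a /subP Pa; split=> //; apply/PB/map_f.
  - by move=> v _; exact: piso0 isoP0.
  - exact: has_at_leastW PB sizeP (has_at_least_dom isoP).
  - exact: has_at_least_setT.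
by split; [exact: sat_back_forth bf | exact: sat_back_forth (back_forth_swap bf)].
Qed.

Lemma Th_liminf f : Th (fun _ : S => True) f -> liminf_I (@Th S) f.
Proof.
move=> [sf [_ sat_f]]; have [A0 [fA0 cA0 satA0]] := sat_eventually f.
exists A0; split=> // B fB A0B; split=> //; split; first exact: consts_in_mono cA0.
exact/(satA0 B fB A0B).
Qed.

Lemma limsup_Th f : limsup_I (@Th S) f -> Th (fun _ : S => True) f.
Proof.
move=> lim; have [A0 [fA0 _ satA0]] := sat_eventually f.
have [B [fB [A0B [sf [cB satB]]]]] := lim A0 fA0.
by split=> //; split; [exact: consts_in_mono cB | exact/(satA0 B fB A0B)].
Qed.

End InfiniteGroup.
End FiniteSubgroups.

Theorem mainTheorem12 (p : nat) (S : zmodType)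
  (hp : prime p)
  (hexp : forall g : S, g *+ p = 0)
  (hinf : ~ finiteP (fun _ : S => True)) :
  (forall f : formula S, limsup_I (@Th S) f <-> Th (fun _ : S => True) f) /\
  (forall f : formula S, liminf_I (@Th S) f <-> Th (fun _ : S => True) f).
Proof.
have limsup_Th := limsup_Th hp hexp hinf.
have Th_liminf := Th_liminf hp hexp hinf.
have liminf_limsup := liminf_limsup hp hexp.
split=> f; split.
- exact: limsup_Th.
- by move/Th_liminf/liminf_limsup.
- by move/liminf_limsup/limsup_Th.
- exact: Th_liminf.
Qed.
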